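(* Let $n\ge 2$, let $\mathcal{B}$ be a maximal commutative subalgebra of $\mathcal{M}_{d\times d}(\mathbb{C})$, and let $\mathcal{A}$ be a maximal subalgebra of $\mathcal{T}_{n,d}(\mathcal{B})$ (i.e. an algebra contained in $\mathcal{T}_{n,d}(\mathcal{B})$ not properly contained in any other algebra contained in $\mathcal{T}_{n,d}(\mathcal{B})$). Suppose $\mathcal{A}$ contains an element $\mathbf{T}=(T_{p-q})_{p,q=0}^{n-1}$ such that $T_p$ is invertible for some $p\neq 0$. Then $\mathcal{A}=\mathcal{F}_{A,B}^{\mathcal{B}}$ for some $A,B\in\mathcal{B}$.
   Context: For positive integers $n,d$, $\mathcal{T}_{n,d}$ denotes the set of block Toeplitz matrices $\mathbf{T}=(T_{p-q})_{p,q=0}^{n-1}$: $nd\times nd$ complex matrices partitioned into $n\times n$ blocks of size $d\times d$, whose $(p,q)$ block is $T_{p-q}$ for some $T_{-(n-1)},\dots,T_{n-1}\in\mathcal{M}_{d\times d}(\mathbb{C})$. For a subalgebra $\mathcal{B}\subseteq\mathcal{M}_{d\times d}(\mathbb{C})$, $\mathcal{T}_{n,d}(\mathcal{B})$ is the set of $\mathbf{T}\in\mathcal{T}_{n,d}$ with all $T_j\in\mathcal{B}$. An algebra contained in a set of matrices is a subset that is a linear subspace closed under matrix multiplication. For $A,B\in\mathcal{M}_{d\times d}(\mathbb{C})$, $$\mathcal{F}_{A,B}^{\mathcal{B}}=\{(T_{p-q})_{p,q=0}^{n-1}\in\mathcal{T}_{n,d}(\mathcal{B}) : AT_j=BT_{j-n}\text{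 for } j=1,2,\dots,n-1\}.$$ A maximal commutative subalgebra of $\mathcal{M}_{d\times d}(\mathbb{C})$ is a commutative subalgebra not properly contained in any commutative subalgebra. *)

From HB Require Import structures.
From mathcomp Require Import all_boot all_order all_algebra.
Set Implicit Arguments. Unset Strict Implicit. Unset Printing Implicit Defensive.
Import Order.TTheory GRing.Theory Num.Theory.
Local Open Scope ring_scope.

(* The base field: an arbitrary numeric algebraically closed field
   (char 0, algebraically closed); C (complex numbers) is such a field. *)

Section Defs.
Variable C : numClosedFieldType.

Definition is_mx_algebra (k : nat) (S : 'M[C]_k -> Prop) : Prop :=
  [/\ S 0,
      (forall (a : C) x y, S x -> S y -> S (a *: x + y))
    & (forall x y, S x -> S y -> S (x *m y))].

Definition algebra_in (k : nat) (S X : 'M[C]_k -> Prop) : Prop :=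
  is_mx_algebra S /\ (forall x, S x -> X x).

Definition maximal_algebra_in (k : nat) (S X : 'M[C]_k -> Prop) : Prop :=
  algebra_in S X /\
  (forall S', algebra_in S' X -> (forall x, S x -> S' x) -> forall x, S' x -> S x).

Definition commutative_set (k : nat) (S : 'M[C]_k -> Prop) : Prop :=
  forall x y, S x -> S y -> x *m y = y *m x.

Definition maximal_commutative_subalgebra (d : nat) (B : 'M[C]_d -> Prop) : Prop :=
  [/\ is_mx_algebra B, commutative_set B &
      forall B', is_mx_algebra B' -> commutative_set B' ->
        (forall x, B x -> B' x) -> forall x, B' x -> B x].

(* M : nd x nd is the block Toeplitz matrix with blocks (Tf (p - q))_{p,q};
   the (p,q) block occupies rows p*d + a and columns q*d + b (a, b < d). *)
Definition block_toeplitz_of (n d : nat) (Tf : int -> 'M[C]_d) (M : 'M[C]_(n * d)) : Prop :=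
  forall (p q : 'I_n) (a b : 'I_d),
    M (mxvec_index p a) (mxvec_index q b) = Tf (p%:Z - q%:Z) a b.

Definition Toeplitz_B (n d : nat) (B : 'M[C]_d -> Prop) (M : 'M[C]_(n * d)) : Prop :=
  exists Tf : int -> 'M[C]_d, block_toeplitz_of Tf M /\
    (forall j : int, (absz j < n)%N -> B (Tf j)).

Definition F_set (n d : nat) (B : 'M[C]_d -> Prop) (A B0 : 'M[C]_d)
    (M : 'M[C]_(n * d)) : Prop :=
  exists Tf : int -> 'M[C]_d, block_toeplitz_of Tf M /\
    (forall j : int, (absz j < n)%N -> B (Tf j)) /\
    (forall j : nat, (1 <= j <= n.-1)%N ->
       A *m Tf j%:Z = B0 *m Tf (j%:Z - n%:Z)).

End Defs.

From HB Require Import structures.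
From mathcomp Require Import all_boot all_order all_algebra.
From mathcomp Require Import zify.
Set Implicit Arguments. Unset Strict Implicit. Unset Printing Implicit Defensive.
Import Order.TTheory GRing.Theory Num.Theory.
Local Open Scope ring_scope.

(* Let M0 = (T_(p-q)) be the element of the algebra with T_p invertible and
   S = (S_(p-q)) any element.  Since M0 S is again block Toeplitz, comparing
   its blocks (i, n-j) and (i-1, n-1-j) gives T_i S_(j-n) = T_(i-n) S_j for
   1 <= i, j <= n-1; taking i = p or i = n+p places the algebra inside
   F_(A,B) with A = T_(i-n), B = T_i, one of which is invertible.  If B is
   invertible, F_(A,B) is the set of matrices with blocks in the commutative
   algebra that commute with the twisted block shift carrying B on the block
   subdiagonal and A in the top right corner; if A is invertible, the same
   holds with the block transpose of that shift.  A centralizer is an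
   algebra, so maximality forces equality. *)

Section Blocks.
Variables (C : numClosedFieldType) (n d : nat).

Definition blk (M : 'M[C]_(n * d)) (p q : 'I_n) : 'M[C]_d :=
  \matrix_(a, b) M (mxvec_index p a) (mxvec_index q b).

Definition mxvec_pair (k : 'I_(n * d)) : 'I_n * 'I_d :=
  enum_val (cast_ord (esym (mxvec_cast n d)) k).

Definition blkmx (f : 'I_n -> 'I_n -> 'M[C]_d) : 'M[C]_(n * d) :=
  \matrix_(i, j) f (mxvec_pair i).1 (mxvec_pair j).1
                   (mxvec_pair i).2 (mxvec_pair j).2.

Lemma mxvec_pairK p a : mxvec_pair (mxvec_index p a) = (p, a).
Proof. by rewrite /mxvec_pair /mxvec_index cast_ordK enum_rankK. Qed.

Lemma blk_blkmx f p q : blk (blkmx f) p q = f p q.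
Proof. by apply/matrixP => a b; rewrite !mxE !mxvec_pairK. Qed.

Lemma blk_inj M N : (forall p q, blk M p q = blk N p q) -> M = N.
Proof.
move=> eqMN; apply/matrixP => i j.
case/mxvec_indexP: i => p a; case/mxvec_indexP: j => q b.
by have /matrixP/(_ a b) := eqMN p q; rewrite !mxE.
Qed.

Lemma blk_mul M N p q : blk (M *m N) p q = \sum_r blk M p r *m blk N r q.
Proof.
apply/matrixP => a b; rewrite !mxE summxE.
rewrite (reindex (uncurry (@mxvec_index n d))) /=; last first.
  have [g gK Kg] := curry_mxvec_bij n d.
  by exists g => x _; [apply: gK | apply: Kg].
rewrite [RHS](eq_bigr (fun r => \sum_c blk M p r a c * blk N r q c b)); last first.
  by move=> r _; rewrite mxE.
by rewrite pair_big; apply: eq_bigr => -[r c] _; rewrite !mxE.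
Qed.

Lemma blk_scale_add (a : C) M N p q :
  blk (a *: M + N) p q = a *: blk M p q + blk N p q.
Proof. by apply/matrixP => x y; rewrite !mxE. Qed.

Lemma blk0 p q : blk 0 p q = 0.
Proof. by apply/matrixP => x y; rewrite !mxE. Qed.

Lemma block_toeplitz_ofP f M :
  block_toeplitz_of f M <-> forall p q, blk M p q = f (p%:Z - q%:Z).
Proof.
split=> hM p q; first by apply/matrixP => a b; rewrite mxE hM.
by move=> a b; have /matrixP/(_ a b) := hM p q; rewrite mxE.
Qed.

Definition blktr (M : 'M[C]_(n * d)) := blkmx (fun p q => blk M q p).

Lemma blk_blktr M p q : blk (blktr M) p q = blk M q p.
Proof. exact: blk_blkmx. Qed.

Lemma blktrK : involutive blktr.
Proof. by move=> M; apply: blk_inj => p q; rewrite !blk_blktr. Qed.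

Lemma blktr_toeplitz f M :
  block_toeplitz_of f M -> block_toeplitz_of (fun j => f (- j)) (blktr M).
Proof.
by move=> /block_toeplitz_ofP hM; apply/block_toeplitz_ofP => p q;
  rewrite blk_blktr hM opprB.
Qed.

End Blocks.

Section MaximalAlgebra.
Variables (C : numClosedFieldType) (k : nat).

Lemma is_mx_algebra_eq (S S' : 'M[C]_k -> Prop) :
  (forall M, S M <-> S' M) -> is_mx_algebra S -> is_mx_algebra S'.
Proof.
move=> eqS [S0 Slin Smul]; split; first exact/eqS.
- by move=> a x y /eqS Sx /eqS Sy; apply/eqS/Slin.
- by move=> x y /eqS Sx /eqS Sy; apply/eqS/Smul.
Qed.

Lemma centralizer_algebra (S : 'M[C]_k -> Prop) (Z : 'M[C]_k) :
  is_mx_algebra S -> is_mx_algebra (fun M => S M /\ M *m Z = Z *m M).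
Proof.
case=> S0 Slin Smul; split.
- by split=> //; rewrite mul0mx mulmx0.
- move=> a x y [Sx xZ] [Sy yZ]; split; first exact: Slin.
  by rewrite mulmxDl mulmxDr -scalemxAl -scalemxAr xZ yZ.
- move=> x y [Sx xZ] [Sy yZ]; split; first exact: Smul.
  by rewrite -mulmxA yZ !mulmxA xZ.
Qed.

Lemma maximal_algebra_in_eq (Alg F X : 'M[C]_k -> Prop) :
  maximal_algebra_in Alg X -> is_mx_algebra F -> (forall M, F M -> X M) ->
  (forall M, Alg M -> F M) -> forall M, Alg M <-> F M.
Proof.
move=> [_ Amax] Falg FX AF M; split; first exact: AF.
by apply: (Amax F) => //; split.
Qed.

End MaximalAlgebra.

Section ToeplitzBlocks.
Variables (C : numClosedFieldType) (n' d : nat).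
Local Notation n := n'.+2.
Local Notation blk := (@blk C n d).

Lemma shift_invariant_toeplitz M :
  (forall p q : nat, (p < n'.+1)%N -> (q < n'.+1)%N ->
     blk M (inord p) (inord q) = blk M (inord p.+1) (inord q.+1)) ->
  exists f, block_toeplitz_of f M.
Proof.
pose N p q := blk M (inord p) (inord q).
move=> shiftM; have {}shiftM p q : (p < n'.+1)%N -> (q < n'.+1)%N ->
  N p q = N p.+1 q.+1 by exact: shiftM.
have shiftN k p q : (p + k < n)%N -> (q + k < n)%N -> N (p + k)%N (q + k)%N = N p q.
  elim: k p q => [|k IH] p q hp hq; first by rewrite !addn0.
  by rewrite !addnS -shiftM ?IH //; lia.
exists (fun j : int => if 0 <= j then N `|j|%N 0%N else N 0%N `|j|%N).
apply/block_toeplitz_ofP => p q; have := ltn_ord p; have := ltn_ord q => hq hp.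
have -> : blk M p q = N p q by rewrite /N !inord_val.
case: ifP => pq.
  have -> : `|(p%:Z - q%:Z)|%N = (p - q)%N by lia.
  have := shiftN q (p - q)%N 0%N; rewrite add0n subnK; last lia.
  by move=> -> //; lia.
have -> : `|(p%:Z - q%:Z)|%N = (q - p)%N by lia.
have := shiftN p 0%N (q - p)%N; rewrite add0n subnK; last lia.
by move=> -> //; lia.
Qed.

Definition F_cond (A B0 : 'M[C]_d) (f : int -> 'M[C]_d) :=
  forall j : nat, (1 <= j <= n'.+1)%N -> A *m f j%:Z = B0 *m f (j%:Z - n%:Z).

Lemma F_cond_opp A B0 f : F_cond A B0 f -> F_cond B0 A (fun j => f (- j)).
Proof.
move=> hf j hj; have := hf (n - j)%N.
have -> : - j%:Z = (n - j)%N%:Z - n%:Z by lia.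
have -> : - (j%:Z - n%:Z) = (n - j)%N%:Z by lia.
by move=> -> //; lia.
Qed.

(* Blocks (i, n-j) and (i-1, n-1-j) of M0 S share all but one summand. *)
Lemma toeplitz_mul_F_cond (M0 S : 'M[C]_(n * d)) Tf Sf w (i : nat) :
  block_toeplitz_of Tf M0 -> block_toeplitz_of Sf S ->
  block_toeplitz_of w (M0 *m S) -> (1 <= i <= n'.+1)%N ->
  F_cond (Tf (i%:Z - n%:Z)) (Tf i%:Z) Sf.
Proof.
move=> /block_toeplitz_ofP TM0 /block_toeplitz_ofP TS /block_toeplitz_ofP Tw hi j hj.
pose G (r : nat) := Tf (i%:Z - r.+1%:Z) *m Sf (r.+1%:Z - (n - j)%N%:Z).
have lower : blk (M0 *m S) (inord i) (inord (n - j)) =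
    Tf i%:Z *m Sf (j%:Z - n%:Z) + \sum_(r < n'.+1) G r.
  rewrite blk_mul big_ord_recl TM0 TS !inordK /=; try lia.
  congr (Tf _ *m Sf _ + _); try lia.
  by apply: eq_bigr => r _; rewrite TM0 TS !inordK /=; try lia;
    rewrite /G; congr (Tf _ *m Sf _); lia.
have upper : blk (M0 *m S) (inord i.-1) (inord (n'.+1 - j)) =
    \sum_(r < n'.+1) G r + Tf (i%:Z - n%:Z) *m Sf j%:Z.
  rewrite blk_mul big_ord_recr TM0 TS !inordK /=; try lia.
  congr (_ + Tf _ *m Sf _); try lia.
  by apply: eq_bigr => r _; rewrite TM0 TS !inordK /=; try lia;
    rewrite /G; congr (Tf _ *m Sf _); lia.
have : blk (M0 *m S) (inord i) (inord (n - j)) =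
       blk (M0 *m S) (inord i.-1) (inord (n'.+1 - j)).
  by rewrite !Tw !inordK; try lia; congr (w _); lia.
by rewrite lower upper addrC => /addrI.
Qed.

Definition shift_blk (X Y : 'M[C]_d) (p r : 'I_n) : 'M[C]_d :=
  if p == r.+1 :> nat then X
  else if (p == 0 :> nat) && (r == n'.+1 :> nat) then Y else 0.

Definition shiftmx X Y := blkmx (shift_blk X Y).

Lemma blk_shiftmx_mul X Y M p q : blk (shiftmx X Y *m M) p q =
  if p == 0 :> nat then Y *m blk M ord_max q else X *m blk M (inord p.-1) q.
Proof.
rewrite blk_mul; case: ifP => p0.
  rewrite (bigD1 ord_max) //= big1 ?addr0; first by rewrite blk_blkmx /shift_blk (eqP p0) /= eqxx.
  move=> r /eqP rmax; rewrite blk_blkmx /shift_blk (eqP p0) /=.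
  have -> : (r == n'.+1 :> nat) = false.
    by apply/negbTE/eqP => rn; apply: rmax; apply: val_inj.
  by rewrite mul0mx.
have pn : (p.-1 < n)%N by have := ltn_ord p; lia.
rewrite (bigD1 (inord p.-1)) //= big1 ?addr0.
  by rewrite blk_blkmx /shift_blk inordK // p0 prednK ?eqxx // lt0n p0.
move=> r /eqP rp; rewrite blk_blkmx /shift_blk p0 /=.
have -> : (p == r.+1 :> nat) = false.
  by apply/negbTE/eqP => pr; apply: rp; apply: val_inj; rewrite /= inordK // pr.
by rewrite mul0mx.
Qed.

Lemma blk_mul_shiftmx X Y M p q : blk (M *m shiftmx X Y) p q =
  if q == n'.+1 :> nat then blk M p ord0 *m Y else blk M p (inord q.+1) *m X.
Proof.
rewrite blk_mul; case: ifP => qn.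
  rewrite (bigD1 ord0) //= big1 ?addr0; first by rewrite blk_blkmx /shift_blk qn.
  move=> r /eqP r0; rewrite blk_blkmx /shift_blk.
  have -> : (r == q.+1 :> nat) = false.
    by apply/negbTE/eqP => rq; have := ltn_ord r; rewrite rq (eqP qn); lia.
  have -> : (r == 0 :> nat) = false.
    by apply/negbTE/eqP => rz; apply: r0; apply: val_inj.
  by rewrite mulmx0.
have qn1 : (q.+1 < n)%N by have := ltn_ord q; move/negbT: qn; lia.
rewrite (bigD1 (inord q.+1)) //= big1 ?addr0; first by rewrite blk_blkmx /shift_blk inordK // eqxx.
move=> r /eqP rq; rewrite blk_blkmx /shift_blk qn andbF.
have -> : (r == q.+1 :> nat) = false.
  by apply/negbTE/eqP => rq'; apply: rq; apply: val_inj; rewrite /= inordK // rq'.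
by rewrite mulmx0.
Qed.

End ToeplitzBlocks.

Section CommutativeBlocks.
Variables (C : numClosedFieldType) (n' d : nat).
Local Notation n := n'.+2.
Variable B : 'M[C]_d -> Prop.
Hypotheses (Balg : is_mx_algebra B) (Bcomm : commutative_set B).
Local Notation blk := (@blk C n d).
Local Notation blktr := (@blktr C n d).
Local Notation shiftmx := (@shiftmx C n' d).
Local Notation F_cond := (@F_cond C n' d).
Local Notation F_set := (@F_set C n d).

Lemma Bpred0 : B 0. Proof. by case: Balg. Qed.

Lemma BpredD x y : B x -> B y -> B (x + y).
Proof. by case: Balg => _ Blin _ Bx By; have := Blin 1 x y Bx By; rewrite scale1r. Qed.

Lemma BpredZ (a : C) x : B x -> B (a *: x).
Proof. by case: Balg => B0 Blin _ Bx; have := Blin a x 0 Bx B0; rewrite addr0. Qed.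

Lemma BpredM x y : B x -> B y -> B (x *m y).
Proof. by case: Balg => _ _ Bmul; apply: Bmul. Qed.

Definition blocks_in (M : 'M[C]_(n * d)) := forall p q, B (blk M p q).

Lemma blocks_in_algebra : is_mx_algebra blocks_in.
Proof.
split=> [p q | a x y Bx By p q | x y Bx By p q].
- by rewrite blk0; apply: Bpred0.
- by rewrite blk_scale_add; apply: BpredD; [apply: BpredZ|].
- by rewrite blk_mul; apply: (big_ind B Bpred0 BpredD) => r _; apply: BpredM.
Qed.

Lemma blocks_in_toeplitz f M : block_toeplitz_of f M ->
  blocks_in M <-> forall j : int, (absz j < n)%N -> B (f j).
Proof.
move=> /block_toeplitz_ofP TM; split=> [BM j jn | Bf p q]; last first.
  by rewrite TM; apply: Bf; have := ltn_ord p; have := ltn_ord q; lia.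
case: (boolP (0 <= j)) => j0.
  have := BM (inord `|j|%N) ord0; rewrite TM inordK //=.
  by have -> : `|j|%N%:Z - 0%:Z = j by lia.
have := BM ord0 (inord `|j|%N); rewrite TM inordK //=.
by have -> : 0%:Z - `|j|%N%:Z = j by lia.
Qed.

Lemma blocks_in_blktr M : blocks_in M -> blocks_in (blktr M).
Proof. by move=> BM p q; rewrite blk_blktr. Qed.

Lemma blktr_mul M N : blocks_in M -> blocks_in N ->
  blktr (M *m N) = blktr N *m blktr M.
Proof.
move=> BM BN; apply: blk_inj => p q; rewrite blk_blktr !blk_mul.
by apply: eq_bigr => r _; rewrite !blk_blktr Bcomm.
Qed.

Lemma commute_blktr M Z : blocks_in M -> blocks_in Z ->
  M *m blktr Z = blktr Z *m M <-> blktr M *m Z = Z *m blktr M.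
Proof.
move=> BM BZ; have BtM := blocks_in_blktr BM; have BtZ := blocks_in_blktr BZ.
by split=> /(congr1 blktr); rewrite !blktr_mul // blktrK // => /esym.
Qed.

Lemma blocks_in_shiftmx X Y : B X -> B Y -> blocks_in (shiftmx X Y).
Proof.
move=> BX BY p q; rewrite blk_blkmx /shift_blk.
by case: ifP => // _; case: ifP => // _; apply: Bpred0.
Qed.

(* For block Toeplitz M, only the wrapped-around block row and column of the
   commutator with the shift carry information. *)
Lemma toeplitz_commute_shiftP X Y f M : B X -> B Y -> blocks_in M ->
  block_toeplitz_of f M ->
  M *m shiftmx X Y = shiftmx X Y *m M <-> F_cond Y X f.
Proof.
move=> BX BY BM /block_toeplitz_ofP TM; split=> [comm j hj | Ff].
  have := congr1 (fun K => blk K ord0 (inord (n'.+1 - j))) comm.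
  rewrite /= blk_shiftmx_mul blk_mul_shiftmx !inordK /=; try lia.
  have -> : (n'.+1 - j == n'.+1)%N = false by apply/negbTE/eqP; lia.
  rewrite (Bcomm (BM _ _) BX) !TM !inordK /=; try lia.
  have -> : (n'.+1%:Z - (n'.+1 - j)%N%:Z) = j%:Z by lia.
  by have -> : (0%:Z - (n'.+1 - j).+1%:Z) = j%:Z - n%:Z by lia.
apply: blk_inj => p q; rewrite blk_shiftmx_mul blk_mul_shiftmx.
have := ltn_ord p; have := ltn_ord q => qn pn.
case: ifP => qmax; case: ifP => p0.
- by rewrite (Bcomm (BM _ _) BY) !TM; congr (Y *m f _) => /=; lia.
- rewrite (Bcomm (BM _ _) BY) !TM inordK /=; last lia.
  have -> : p%:Z - 0%:Z = p%:Z by lia.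
  have -> : p.-1%:Z - q%:Z = p%:Z - n%:Z by lia.
  by apply: Ff; lia.
- rewrite (Bcomm (BM _ _) BX) !TM inordK /=; last lia.
  have -> : n'.+1%:Z - q%:Z = (n'.+1 - q)%N%:Z by lia.
  have -> : p%:Z - q.+1%:Z = (n'.+1 - q)%N%:Z - n%:Z by lia.
  by rewrite Ff //; lia.
- by rewrite (Bcomm (BM _ _) BX) !TM !inordK; try lia; congr (X *m f _); lia.
Qed.

Lemma commute_shift_toeplitz X Y M : X \in unitmx -> B X -> blocks_in M ->
  M *m shiftmx X Y = shiftmx X Y *m M -> exists f, block_toeplitz_of f M.
Proof.
move=> uX BX BM comm; apply: shift_invariant_toeplitz => p q hp hq.
have := congr1 (fun K => blk K (inord p.+1) (inord q)) comm.
rewrite /= blk_shiftmx_mul blk_mul_shiftmx !inordK; try lia.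
have -> : (q == n'.+1)%N = false by apply/negbTE/eqP; lia.
by rewrite /= (Bcomm (BM _ _) BX) => /(can_inj (mulKmx uX)).
Qed.

Lemma F_set_shiftmx X Y M : X \in unitmx -> B X -> B Y ->
  F_set B Y X M <-> blocks_in M /\ M *m shiftmx X Y = shiftmx X Y *m M.
Proof.
move=> uX BX BY; split=> [[f [TM [Bf Ff]]] | [BM comm]].
  have BM : blocks_in M by apply/(blocks_in_toeplitz TM).
  by split=> //; apply/(toeplitz_commute_shiftP BX BY BM TM).
have [f TM] := commute_shift_toeplitz uX BX BM comm.
exists f; split=> //; split; first exact/(blocks_in_toeplitz TM).
exact/(toeplitz_commute_shiftP BX BY BM TM).
Qed.

Lemma F_set_blktr A B0 M : F_set B A B0 M -> F_set B B0 A (blktr M).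
Proof.
move=> [f [TM [Bf Ff]]]; exists (fun j => f (- j)); split.
  exact: blktr_toeplitz.
by split=> [j hj|]; [apply: Bf; rewrite abszN | apply: F_cond_opp].
Qed.

Lemma F_set_blktr_shiftmx X Y M : X \in unitmx -> B X -> B Y ->
  F_set B X Y M <->
  blocks_in M /\ M *m blktr (shiftmx X Y) = blktr (shiftmx X Y) *m M.
Proof.
move=> uX BX BY; have BZ := blocks_in_shiftmx BX BY.
have blocks_inE : blocks_in M <-> blocks_in (blktr M).
  by split=> [|/blocks_in_blktr]; [apply: blocks_in_blktr | rewrite blktrK].
split=> [/F_set_blktr | [BM comm]].
  move=> /(F_set_shiftmx _ uX BX BY) [BtM comm].
  have BM : blocks_in M by apply/blocks_inE.
  by split=> //; apply/(commute_blktr BM BZ).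
rewrite -[M]blktrK; apply: F_set_blktr; apply/(F_set_shiftmx _ uX BX BY).
by split; [apply/blocks_inE | apply/(commute_blktr BM BZ)].
Qed.

Lemma F_set_algebra A B0 : B A -> B B0 ->
  A \in unitmx \/ B0 \in unitmx -> is_mx_algebra (F_set B A B0).
Proof.
move=> BA BB0 [uA | uB0].
  apply: is_mx_algebra_eq (centralizer_algebra _ blocks_in_algebra) => M.
  exact: iff_sym (F_set_blktr_shiftmx _ uA BA BB0).
apply: is_mx_algebra_eq (centralizer_algebra _ blocks_in_algebra) => M.
exact: iff_sym (F_set_shiftmx _ uB0 BB0 BA).
Qed.

Lemma algebra_in_Toeplitz_F_set Alg M0 Tf (i : nat) :
  algebra_in Alg (Toeplitz_B B) -> Alg M0 -> block_toeplitz_of Tf M0 ->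
  (1 <= i <= n'.+1)%N ->
  forall S, Alg S -> F_set B (Tf (i%:Z - n%:Z)) (Tf i%:Z) S.
Proof.
move=> [[_ _ Amul] Asub] AM0 TM0 hi S AS.
have [Sf [TS BSf]] := Asub S AS.
have [w [Tw _]] := Asub _ (Amul _ _ AM0 AS).
by exists Sf; do !split=> //; apply: toeplitz_mul_F_cond Tw hi.
Qed.

End CommutativeBlocks.

Theorem corollary4p6 (C : numClosedFieldType) (n d : nat)
  (hn : (2 <= n)%N) (hd : (0 < d)%N)
  (B : 'M[C]_d -> Prop) (Alg : 'M[C]_(n * d) -> Prop) :
  maximal_commutative_subalgebra B ->
  maximal_algebra_in Alg (@Toeplitz_B C n d B) ->
  (exists (M : 'M[C]_(n * d)) (Tf : int -> 'M[C]_d) (p : int),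
      [/\ Alg M, block_toeplitz_of Tf M, p != 0, (absz p < n)%N
        & Tf p \in unitmx]) ->
  exists A B0 : 'M[C]_d, [/\ B A, B B0 &
    forall M, Alg M <-> @F_set C n d B A B0 M].
Proof.
case: n hn Alg => [|[|n']] // _ Alg.
move=> [Balg Bcomm _] Amax [M0 [Tf [p [AM0 TM0 p0 pn uTp]]]].
have [AlgT _] := Amax.
have BTf : forall j, (absz j < n'.+2)%N -> B (Tf j).
  have [f [TfM0 Bf]] := AlgT.2 _ AM0.
  by apply/(blocks_in_toeplitz B TM0)/(blocks_in_toeplitz B TfM0).
pose i := if 0 < p then `|p|%N else (n'.+2 - `|p|)%N.
have hi : (1 <= i <= n'.+1)%N by rewrite /i; case: ifP => _; lia.
have [BA BB0] : B (Tf (i%:Z - n'.+2%:Z)) /\ B (Tf i%:Z) by split; apply: BTf; lia.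
exists (Tf (i%:Z - n'.+2%:Z)), (Tf i%:Z); split=> //.
apply: maximal_algebra_in_eq Amax _ _ _.
- apply: F_set_algebra => //; rewrite /i; case: ifP => p_gt0; [right | left].
    by have -> : `|p|%N%:Z = p by lia.
  by have -> : (n'.+2 - `|p|)%N%:Z - n'.+2%:Z = p by lia.
- by move=> M [f [TM [Bf _]]]; exists f.
- exact: algebra_in_Toeplitz_F_set AlgT AM0 TM0 hi.
Qed.
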